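(* Let $\mathcal{C}$ be an $\mathbb{F}_q\mathcal{R}$-skew cyclic code of length $(\alpha,\beta)$, viewed inside $R_{\alpha,\beta}$, and let $M=\{t(x)\in\mathcal{R}[x;\theta]/\langle x^\beta-1\rangle : (m(x),t(x))\in\mathcal{C}\text{ for some } m(x)\in\mathbb{F}_q[x;\Theta]/\langle x^\alpha-1\rangle\}$. Then $M$ is a left $\mathcal{R}[x;\theta]$-submodule of $\mathcal{R}[x;\theta]/\langle x^\beta-1\rangle$ which is generated by a single element.
   Context: Let $p$ be a prime, $q=p^m$, $\mathcal{R}=\mathbb{F}_q[u]/\langle u^2-u\rangle$. Fix $i$; $\Theta(a)=a^{p^i}$ on $\mathbb{F}_q$ and $\theta(a+ub)=a^{p^i}+ub^{p^i}$ on $\mathcal{R}$; $\eta(a+ub)=a$. $\mathbb{F}_q[x;\Theta]$, $\mathcal{R}[x;\theta]$ are skew polynomial rings with multiplication determined by $(ax^i)(bx^j)=a\Theta^i(b)x^{i+j}$ (resp. with $\theta$). $R_{\alpha,\beta}=\mathbb{F}_q[x;\Theta]/\langle x^\alpha-1\rangle\times\mathcal{R}[x;\theta]/\langle x^\beta-1\rangle$, identified with $\mathbb{F}_q^\alpha\times\mathcal{R}^\beta$ via coefficient vectors, is a left $\mathcal{R}[x;\theta]$-module via $r(x)*(k(x),t(x))=(\eta(r(x))k(x),r(x)t(x))$ ($\eta$ coefficientwise, reduction modulo $x^\alpha-1$, $x^\beta-1$). An $\mathbb{F}_q\mathcal{R}$-skew cyclic code of length $(\alpha,\beta)$ is an $\mathcal{R}$-submodule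 $\mathcal{C}$ of $\mathbb{F}_q^\alpha\times\mathcal{R}^\beta$ (with $s*(x,y)=(\eta(s)x,sy)$ componentwise) closed under $\sigma(x_0,\dots,x_{\alpha-1},y_0,\dots,y_{\beta-1})=(\Theta(x_{\alpha-1}),\Theta(x_0),\dots,\Theta(x_{\alpha-2}),\theta(y_{\beta-1}),\theta(y_0),\dots,\theta(y_{\beta-2}))$; equivalently a left $\mathcal{R}[x;\theta]$-submodule of $R_{\alpha,\beta}$. *)

From HB Require Import structures.
From mathcomp Require Import all_boot all_order all_algebra.
From mathcomp Require Import ring.
Set Implicit Arguments. Unset Strict Implicit. Unset Printing Implicit Defensive.
Import GRing.Theory.
Local Open Scope ring_scope.

(* ---------- The ring  R = F[u]/<u^2 - u>,  element a + u b  stored as (a, b) ---- *)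
Record Ru (F : Type) := mkRu { ra : F; rb : F }.
Arguments mkRu {F}.

Section RuRing.
Variable F : fieldType.

Definition ru2p (x : Ru F) : F * F := (ra x, rb x).
Definition p2ru (y : F * F) : Ru F := mkRu y.1 y.2.
Lemma ru2pK : cancel ru2p p2ru. Proof. by case. Qed.

HB.instance Definition _ := Equality.copy (Ru F) (can_type ru2pK).
HB.instance Definition _ := Choice.copy (Ru F) (can_type ru2pK).

Definition ru_zero : Ru F := mkRu 0 0.
Definition ru_add (x y : Ru F) := mkRu (ra x + ra y) (rb x + rb y).
Definition ru_opp (x : Ru F) := mkRu (- ra x) (- rb x).

Lemma ru_addA : associative ru_add.
Proof. by case=> ? ?; case=> ? ?; case=> ? ?; rewrite /ru_add /=; congr mkRu; ring. Qed.
Lemma ru_addC : commutative ru_add.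
Proof. by case=> ? ?; case=> ? ?; rewrite /ru_add /=; congr mkRu; ring. Qed.
Lemma ru_add0 : left_id ru_zero ru_add.
Proof. by case=> ? ?; rewrite /ru_add /=; congr mkRu; ring. Qed.
Lemma ru_addN : left_inverse ru_zero ru_opp ru_add.
Proof. by case=> ? ?; rewrite /ru_add /=; congr mkRu; ring. Qed.

HB.instance Definition _ := GRing.isZmodule.Build (Ru F) ru_addA ru_addC ru_add0 ru_addN.

(* (a + u b)(c + u d) = ac + u (ad + bc + bd), using u^2 = u *)
Definition ru_one : Ru F := mkRu 1 0.
Definition ru_mul (x y : Ru F) :=
  mkRu (ra x * ra y) (ra x * rb y + rb x * ra y + rb x * rb y).

Lemma ru_mulA : associative ru_mul.
Proof. by case=> ? ?; case=> ? ?; case=> ? ?; rewrite /ru_mul /=; congr mkRu; ring. Qed.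
Lemma ru_mulC : commutative ru_mul.
Proof. by case=> ? ?; case=> ? ?; rewrite /ru_mul /=; congr mkRu; ring. Qed.
Lemma ru_mul1 : left_id ru_one ru_mul.
Proof. by case=> ? ?; rewrite /ru_mul /=; congr mkRu; ring. Qed.
Lemma ru_mulDl : left_distributive ru_mul ru_add.
Proof. by case=> ? ?; case=> ? ?; case=> ? ?; rewrite /ru_mul /ru_add /=; congr mkRu; ring. Qed.
Lemma ru_one_neq0 : ru_one != ru_zero.
Proof. by apply/eqP => -[] /eqP; rewrite oner_eq0. Qed.

HB.instance Definition _ := GRing.Zmodule_isComNzRing.Build (Ru F)
  ru_mulA ru_mulC ru_mul1 ru_mulDl ru_one_neq0.

Definition ru_u : Ru F := mkRu 0 1.
Definition ru_lift (f : F -> F) (x : Ru F) : Ru F := mkRu (f (ra x)) (f (rb x)).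
Definition eta (x : Ru F) : F := ra x.
End RuRing.

Definition Theta (F : fieldType) (p i : nat) (a : F) : F := a ^+ (p ^ i).
Definition theta (F : fieldType) (p i : nat) (x : Ru F) : Ru F :=
  ru_lift (Theta p i) x.

(* sigma_f (v_0,...,v_{n-1}) = (f v_{n-1}, f v_0, ..., f v_{n-2}) *)
Definition twshift (T : Type) (n : nat) (f : T -> T) (v : 'rV[T]_n) : 'rV[T]_n :=
  \row_(j < n) f (v 0 (ord_pred j)).

Definition sigmaFR (F : fieldType) (p i a b : nat)
    (c : 'rV[F]_a * 'rV[Ru F]_b) : 'rV[F]_a * 'rV[Ru F]_b :=
  (twshift (Theta p i) c.1, twshift (theta p i) c.2).

Definition scaleFR (F : fieldType) (a b : nat) (s : Ru F)
    (c : 'rV[F]_a * 'rV[Ru F]_b) : 'rV[F]_a * 'rV[Ru F]_b :=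
  (map_mx (fun z => eta s * z) c.1, map_mx (fun z => s * z) c.2).

Definition skew_cyclic_code (F : fieldType) (p i a b : nat)
    (C : 'rV[F]_a * 'rV[Ru F]_b -> Prop) : Prop :=
  [/\ C (0, 0),
      (forall c d, C c -> C d -> C (c.1 + d.1, c.2 + d.2)),
      (forall s c, C c -> C (scaleFR s c)) &
      (forall c, C c -> C (sigmaFR p i c))].

(* Elements of R[x;theta] are stored by their coefficient sequence in {poly R};
   the multiplication is the skew one: (a x^i)(b x^j) = a theta^i(b) x^(i+j). *)
Definition skmul (R : nzRingType) (th : R -> R) (f g : {poly R}) : {poly R} :=
  \poly_(k < (size f + size g).-1)
    \sum_(i < k.+1) f`_i * iter i th (g`_(k - i)).

(* Reduction modulo x^n - 1 (left ideal generated by x^n - 1) to the coefficient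
   vector in R^n:  x^k == x^(k mod n). *)
Definition redmod (R : nzRingType) (n : nat) (h : {poly R}) : 'rV[R]_n :=
  \row_(k < n) \sum_(0 <= j < size h | (j %% n)%N == k :> nat) h`_j.

Definition rep (R : nzRingType) (n : nat) (t : 'rV[R]_n) : {poly R} :=
  Poly [seq t 0 k | k <- enum 'I_n].

Definition skact (R : nzRingType) (th : R -> R) (n : nat)
    (r : {poly R}) (t : 'rV[R]_n) : 'rV[R]_n :=
  redmod n (skmul th r (rep t)).

Definition left_submodule (R : nzRingType) (th : R -> R) (n : nat)
    (M : 'rV[R]_n -> Prop) : Prop :=
  [/\ M 0,
      (forall t1 t2, M t1 -> M t2 -> M (t1 + t2)) &
      (forall r t, M t -> M (skact th r t))].

Definition singly_generated (R : nzRingType) (th : R -> R) (n : nat)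
    (M : 'rV[R]_n -> Prop) : Prop :=
  exists g : 'rV[R]_n, forall t, M t <-> exists r : {poly R}, t = skact th r g.

From HB Require Import structures.
From mathcomp Require Import all_boot all_order all_algebra all_field.
From mathcomp Require Import zify.
From Stdlib Require Import Classical.
Set Implicit Arguments. Unset Strict Implicit. Unset Printing Implicit Defensive.
Import GRing.Theory.
Local Open Scope ring_scope.

(* Since u^2 = u, the map a + u b |-> (a, a + b) identifies R with F x F (the
   idempotents being 1 - u and u), and both coordinates intertwine theta with
   Theta.  Hence M projects onto two subspaces of F^beta that are stable under
   the Theta-twisted cyclic shift.  Over a field such a subspace is spanned by
   the twisted shifts of a nonzero element g whose last nonzero coordinate has
   the least possible index: since Theta kills no nonzero element, the shifts
   of g cancel the top coordinate of any other element, and one concludes by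
   induction on that index.  Lifting generators t1, t2 of the two projections
   to M, the element (1 - u) t1 + u t2 generates M, because r(x) acts on t as
   sum_i r_i sigma^i(t). *)

Lemma ex_minimal (P : nat -> Prop) :
  (exists n, P n) -> exists n, P n /\ forall m, (m < n)%N -> ~ P m.
Proof.
case=> n; elim/ltn_ind: n => n IH Pn.
have [[m [lt_mn Pm]] | no_smaller] := classic (exists m, (m < n)%N /\ P m).
  exact: IH Pm.
by exists n; split=> // m lt_mn Pm; apply: no_smaller; exists m.
Qed.

Lemma iter_closed (T : Type) (P : T -> Prop) (f : T -> T) j x :
  (forall y, P y -> P (f y)) -> P x -> P (iter j f x).
Proof. by move=> Pf Px; elim: j => //= j; apply: Pf. Qed.

Section CyclicIndex.
Variable n : nat.
Implicit Types (j : nat) (k x : 'I_n).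

Lemma iter_ord_predK j k : ((iter j (@ord_pred n) k + j) %% n)%N = k.
Proof.
elim: j => [|j IH] /=; first by rewrite addn0 modn_small.
set y := iter j _ k in IH *; rewrite -[in RHS]IH -[in RHS](ord_predK y) /=.
by rewrite [RHS]modnDml addSnnS modnDml.
Qed.

Lemma iter_ord_pred_eq j k x : ((x + j) %% n)%N = k -> x = iter j (@ord_pred n) k.
Proof.
move=> xjk; apply: val_inj; rewrite /= -(modn_small (ltn_ord x)).
rewrite -[RHS](modn_small (ltn_ord (iter j _ k))).
by apply/eqP; rewrite -(eqn_modDr j) xjk iter_ord_predK.
Qed.

Lemma val_iter_ord_pred j k : (j <= k)%N -> iter j (@ord_pred n) k = (k - j)%N :> nat.
Proof.
move=> le_jk; have lt_kj_n : (k - j < n)%N by rewrite (leq_ltn_trans (leq_subr _ _)).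
by rewrite -(@iter_ord_pred_eq j k (Ordinal lt_kj_n)) //= subnK // modn_small.
Qed.

Lemma iter_twshift (T : Type) (f : T -> T) j (v : 'rV[T]_n) k :
  iter j (twshift f) v 0 k = iter j f (v 0 (iter j (@ord_pred n) k)).
Proof.
elim: j k => [|j IH] k //=.
by rewrite mxE IH -iterSr.
Qed.

End CyclicIndex.

Section SkewAction.
Variables (R : nzRingType) (th : R -> R) (n : nat).
Hypothesis th0 : th 0 = 0.

Lemma coef_skmul f g k :
  (skmul th f g)`_k = \sum_(0 <= i < k.+1) f`_i * iter i th g`_(k - i).
Proof.
rewrite big_mkord /skmul coef_poly; case: ltnP => // le_fg_k.
symmetry; apply: big1 => i _.
have [lt_i_f | le_f_i] := ltnP i (size f); last by rewrite nth_default ?mul0r.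
rewrite [g`_ _]nth_default ?iter_fix ?mulr0 //.
by move: le_fg_k lt_i_f; case: i => i /= _; lia.
Qed.

Lemma coef_rep (t : 'rV[R]_n) (k : 'I_n) : (rep t)`_k = t 0 k.
Proof. by rewrite coef_Poly (nth_map k) ?size_enum_ord // nth_ord_enum. Qed.

Lemma coef_rep_ge (t : 'rV[R]_n) l : (n <= l)%N -> (rep t)`_l = 0.
Proof. by move=> le_n_l; rewrite coef_Poly nth_default // size_map size_enum_ord. Qed.

Lemma redmodE (h : {poly R}) B k : (size h <= B)%N ->
  redmod n h 0 k = \sum_(0 <= j < B | (j %% n)%N == k) h`_j.
Proof.
move=> le_h_B; rewrite mxE [RHS](big_cat_nat (leq0n _) le_h_B) /=.
rewrite [X in _ = _ + X]big1_seq ?addr0 //.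
by move=> j /andP[_]; rewrite mem_index_iota => /andP[le_h_j _]; rewrite nth_default.
Qed.

Lemma sum_mod_shift (G : nat -> R) i (k : 'I_n) B :
    (forall l, (n <= l)%N -> G l = 0) -> (i + n <= B)%N ->
  \sum_(0 <= j < B | ((j %% n)%N == k) && (i <= j)%N) G (j - i)%N
    = G (iter i (@ord_pred n) k).
Proof.
move=> G_ge le_B.
have le_n_Bi : (n <= B - i)%N by rewrite leq_subRL ?(leq_trans (leq_addr n i)).
rewrite big_mkord.
rewrite -(big_geq_mkord (op := +%R) _ _ (fun j => (j %% n)%N == k) (fun j => G (j - i)%N)).
rewrite -{1}[i]add0n big_addn (big_cat_nat (leq0n _) le_n_Bi) /=.
rewrite [X in _ + X]big1_seq ?addr0 => [|l /andP[_]]; last first.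
  by rewrite mem_index_iota addnK => /andP[/G_ge].
rewrite big_mkord (big_pred1 (iter i (@ord_pred n) k)) /= ?addnK // => x /=.
by apply/eqP/eqP => [/iter_ord_pred_eq|->]; last by rewrite iter_ord_predK.
Qed.

Lemma skactE (r : {poly R}) (t : 'rV[R]_n) K : (size r <= K)%N ->
  skact th r t = \sum_(i < K) r`_i *: iter i (twshift th) t.
Proof.
move=> le_r_K; apply/rowP => k; rewrite summxE.
set h := skmul th r (rep t); set B := (size h + K + n)%N.
have le_h_B : (size h <= B)%N by rewrite /B; lia.
have le_K_B : (K <= B)%N by rewrite /B; lia.
rewrite /skact (redmodE _ le_h_B) big_nat_cond.
under eq_bigr => j /andP[/andP[_ lt_j_B] _].
  rewrite coef_skmul (big_nat_widen _ _ _ _ _ lt_j_B).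
over.
rewrite -big_nat_cond (exchange_big_dep_nat xpredT) //= (big_cat_nat (leq0n K) le_K_B) /=.
rewrite [X in _ + X]big1_seq ?addr0 => [|i /andP[_]]; last first.
  rewrite mem_index_iota => /andP[le_K_i _]; apply: big1 => j _.
  by rewrite nth_default ?mul0r // (leq_trans le_r_K).
rewrite big_mkord; apply: eq_bigr => i _.
rewrite (@sum_mod_shift (fun l => r`_i * iter i th (rep t)`_l)) => [|l le_n_l|].
- by rewrite coef_rep !mxE iter_twshift.
- by rewrite coef_rep_ge // iter_fix ?mulr0.
- by rewrite /B; move: (ltn_ord i); lia.
Qed.
End SkewAction.

Definition twshift_span (K : nzRingType) (Th : K -> K) n (g w : 'rV[K]_n) :=
  exists c : nat -> K, w = \sum_(i < n) c i *: iter i (twshift Th) g.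

Section TwistedCyclic.
Variables (K : fieldType) (Th : K -> K) (n : nat).
Hypotheses (Th0 : Th 0 = 0) (Th_neq0 : forall x, x != 0 -> Th x != 0).
Implicit Types v w g : 'rV[K]_n.

Definition vanishes_from (v : 'rV[K]_n) e := forall k : 'I_n, (e <= k)%N -> v 0 k = 0.

Lemma vanishes_from0 v : vanishes_from v 0 -> v = 0.
Proof. by move=> v0; apply/rowP => k; rewrite mxE v0. Qed.

Lemma vanishes_fromW v e e' : (e <= e')%N -> vanishes_from v e -> vanishes_from v e'.
Proof. by move=> le_ee' ve k le_e'k; rewrite ve // (leq_trans le_ee'). Qed.

Lemma vanishes_from_ge v e : (n <= e)%N -> vanishes_from v e.
Proof.
by move=> le_ne k le_ek; move: (leq_trans le_ne le_ek); rewrite leqNgt ltn_ord.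
Qed.

Lemma twshift_span0 g : twshift_span Th g 0.
Proof. by exists (fun=> 0); rewrite big1 // => i _; rewrite scale0r. Qed.

Lemma twshift_spanDZ g w c j : (j < n)%N -> twshift_span Th g w ->
  twshift_span Th g (w + c *: iter j (twshift Th) g).
Proof.
move=> lt_jn [cw ->]; exists (fun i => cw i + (if i == j then c else 0)).
under [RHS]eq_bigr => i _ do rewrite scalerDl.
rewrite big_split /=; congr (_ + _).
rewrite (bigD1 (Ordinal lt_jn)) //= eqxx big1 ?addr0 // => i.
by rewrite -val_eqE /= => /negbTE ->; rewrite scale0r.
Qed.

Lemma iter_Th_neq0 j x : x != 0 -> iter j Th x != 0.
Proof. by move=> x_neq0; elim: j => //= j; apply: Th_neq0. Qed.

Lemma vanishes_from_sub_twshift g w (d e : 'I_n) :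
    g 0 d != 0 -> vanishes_from g d.+1 -> (d <= e)%N -> vanishes_from w e.+1 ->
  vanishes_from (w - (w 0 e / iter (e - d) Th (g 0 d)) *: iter (e - d) (twshift Th) g) e.
Proof.
move=> gd_neq0 g_van le_de w_van k le_ek; rewrite !mxE iter_twshift.
have le_ek' : (e - d <= k)%N by rewrite (leq_trans (leq_subr _ _)).
have [k_eq_e | k_neq_e] := eqVneq (val k) e; last first.
  have lt_ek : (e < k)%N by rewrite ltn_neqAle eq_sym k_neq_e.
  have lt_d_ek : (d < iter (e - d) (@ord_pred n) k)%N.
    by rewrite val_iter_ord_pred //; move: lt_ek le_de; lia.
  by rewrite (w_van k lt_ek) (g_van _ lt_d_ek) (iter_fix _ Th0) mulr0 subr0.
have -> : iter (e - d) (@ord_pred n) k = d.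
  by apply: ord_inj; rewrite val_iter_ord_pred // k_eq_e subKn.
have -> : k = e by apply: ord_inj.
by rewrite divfK ?subrr // iter_Th_neq0.
Qed.

Variable V : 'rV[K]_n -> Prop.
Hypotheses (V0 : V 0) (VD : forall v w, V v -> V w -> V (v + w))
  (VZ : forall c v, V v -> V (c *: v)) (VS : forall v, V v -> V (twshift Th v)).

Lemma twshift_span_of_minimal g (d : 'I_n) :
    V g -> g 0 d != 0 -> vanishes_from g d.+1 ->
    (forall w, V w -> vanishes_from w d -> w = 0) ->
  forall w, V w -> twshift_span Th g w.
Proof.
move=> Vg gd_neq0 g_van g_min.
suff span_from e w : V w -> vanishes_from w e -> twshift_span Th g w.
  by move=> w Vw; apply: (span_from n) => //; apply: vanishes_from_ge.
elim: e w => [|e IH] w Vw w_van.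
  by rewrite (vanishes_from0 w_van); apply: twshift_span0.
have [le_ne | lt_en] := leqP n e; first by apply: IH => //; apply: vanishes_from_ge.
have [lt_ed | le_de] := ltnP e d.
  by rewrite (g_min w Vw (vanishes_fromW lt_ed w_van)); apply: twshift_span0.
pose c := w 0 (Ordinal lt_en) / iter (e - d) Th (g 0 d).
pose x := iter (e - d) (twshift Th) g.
rewrite -[w](subrK (c *: x)); apply: twshift_spanDZ.
  by rewrite (leq_ltn_trans (leq_subr _ _)).
apply: IH; last exact: (vanishes_from_sub_twshift (e := Ordinal lt_en)).
by rewrite -scaleNr; apply: VD => //; apply: VZ; apply: iter_closed.
Qed.

Lemma twshift_cyclic : exists2 g, V g & forall w, V w -> twshift_span Th g w.
Proof.
have [[w0 [Vw0 w0_neq0]] | V_trivial] := classic (exists w, V w /\ w != 0); last first.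
  exists 0 => // w Vw; suff -> : w = 0 by apply: twshift_span0.
  by apply/eqP; apply: contra_notT V_trivial => w_neq0; exists w.
pose P e := exists w, [/\ V w, w != 0 & vanishes_from w e].
have [[|d] [[g [Vg g_neq0 g_van]] minimal]] :
    exists e, P e /\ forall m, (m < e)%N -> ~ P m.
- by apply: ex_minimal; exists n, w0; split=> //; apply: vanishes_from_ge.
- by rewrite (vanishes_from0 g_van) eqxx in g_neq0.
have g_min w : V w -> vanishes_from w d -> w = 0.
  move=> Vw w_van; apply/eqP; apply: contra_notT (minimal d (ltnSn d)) => w_neq0.
  by exists w.
have lt_dn : (d < n)%N.
  rewrite ltnNge; apply/negP => le_nd.
  by rewrite (g_min g Vg (vanishes_from_ge _ le_nd)) eqxx in g_neq0.
have gd_neq0 : g 0 (Ordinal lt_dn) != 0.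
  apply/eqP => gd0; move/eqP: g_neq0; apply; apply: g_min => // k.
  rewrite leq_eqVlt => /orP[/eqP dk | /g_van //].
  by rewrite (_ : k = Ordinal lt_dn) //; apply: ord_inj.
by exists g => //; apply: (twshift_span_of_minimal Vg gd_neq0).
Qed.

End TwistedCyclic.

Section RuCoordinates.
Variable F : fieldType.
Implicit Types x y : Ru F.

Fact ra_is_zmod_morphism : zmod_morphism (@ra F). Proof. by []. Qed.
Fact ra_is_monoid_morphism : monoid_morphism (@ra F). Proof. by []. Qed.
HB.instance Definition _ := GRing.isZmodMorphism.Build _ _ (@ra F) ra_is_zmod_morphism.
HB.instance Definition _ := GRing.isMonoidMorphism.Build _ _ (@ra F) ra_is_monoid_morphism.

Definition ev1 x : F := ra x + rb x.

Fact ev1_is_zmod_morphism : zmod_morphism ev1.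
Proof. by move=> x y; rewrite /ev1 /= opprD addrACA. Qed.
Fact ev1_is_monoid_morphism : monoid_morphism ev1.
Proof. by split=> [|x y]; rewrite /ev1 /= ?addr0 // mulrDl !mulrDr !addrA. Qed.
HB.instance Definition _ := GRing.isZmodMorphism.Build _ _ ev1 ev1_is_zmod_morphism.
HB.instance Definition _ := GRing.isMonoidMorphism.Build _ _ ev1 ev1_is_monoid_morphism.

Lemma ev1_u : ev1 (ru_u F) = 1. Proof. exact: add0r. Qed.

Lemma ru_eq x y : ra x = ra y -> ev1 x = ev1 y -> x = y.
Proof. by case: x => a b; case: y => c d /= <-; rewrite /ev1 /= => /addrI ->. Qed.

Lemma map_mx_ru_eq m n (A B : 'M[Ru F]_(m, n)) :
  map_mx (@ra F) A = map_mx (@ra F) B -> map_mx ev1 A = map_mx ev1 B -> A = B.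
Proof.
move=> /matrixP eq_ra /matrixP eq_ev1; apply/matrixP => i j.
by apply: ru_eq; [move: (eq_ra i j) | move: (eq_ev1 i j)]; rewrite !mxE.
Qed.

End RuCoordinates.
Arguments ev1 {F}.

Section RuSkewCyclic.
Variables (F : fieldType) (Th : F -> F) (n : nat).
Hypotheses (ThD : {morph Th : x y / x + y}) (Th_neq0 : forall x, x != 0 -> Th x != 0).
Local Notation th := (ru_lift Th).

Let Th0 : Th 0 = 0.
Proof. by apply: (addrI (Th 0)); rewrite -ThD !addr0. Qed.

Let th0 : th 0 = 0.
Proof. by rewrite /ru_lift /= Th0. Qed.

Lemma ev1_th x : ev1 (th x) = Th (ev1 x).
Proof. by rewrite /ev1 /= ThD. Qed.

Lemma map_mx_iter_twshift (f : Ru F -> F) j (t : 'rV_n) :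
    (forall x, f (th x) = Th (f x)) ->
  map_mx f (iter j (twshift th) t) = iter j (twshift Th) (map_mx f t).
Proof.
by move=> f_th; elim: j => //= j <-; apply/rowP => k; rewrite !mxE f_th.
Qed.

Lemma map_mx_twshift_sum (f : {rmorphism Ru F -> F}) (s : nat -> Ru F) (g : 'rV_n) :
    (forall x, f (th x) = Th (f x)) ->
  map_mx f (\sum_(j < n) s j *: iter j (twshift th) g)
    = \sum_(j < n) f (s j) *: iter j (twshift Th) (map_mx f g).
Proof.
move=> f_th; rewrite map_mx_sum; apply: eq_bigr => j _.
by rewrite map_mxZ map_mx_iter_twshift.
Qed.

Variable M : 'rV[Ru F]_n -> Prop.
Hypotheses (M0 : M 0) (MD : forall s t, M s -> M t -> M (s + t))
  (MZ : forall a t, M t -> M (a *: t)) (MS : forall t, M t -> M (twshift th t)).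

Lemma skact_closed r t : M t -> M (skact th r t).
Proof.
move=> Mt; rewrite (skactE th0 _ (leqnn _)).
by apply: (big_ind M) => // i _; apply: MZ; apply: iter_closed.
Qed.

Lemma ru_left_submodule : left_submodule th M.
Proof. by split=> //; apply: skact_closed. Qed.

Lemma image_twshift_cyclic (f : {rmorphism Ru F -> F}) :
    (forall x, f (th x) = Th (f x)) -> (forall c, f (mkRu c 0) = c) ->
  exists2 t, M t & forall w, M w -> twshift_span Th (map_mx f t) (map_mx f w).
Proof.
move=> f_th f_c; pose V v := exists2 t, M t & v = map_mx f t.
have [_ [t Mt ->] span_t] : exists2 g, V g & forall w, V w -> twshift_span Th g w.
  apply: (twshift_cyclic Th0 Th_neq0).
  - by exists 0 => //; rewrite map_mx0.
  - by move=> _ _ [s Ms ->] [t Mt ->]; exists (s + t); [apply: MD | rewrite map_mxD].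
  - by move=> c _ [t Mt ->]; exists (mkRu c 0 *: t); [apply: MZ | rewrite map_mxZ f_c].
  - by move=> _ [t Mt ->]; exists (twshift th t); [apply: MS | rewrite (map_mx_iter_twshift 1)].
by exists t => // w Mw; apply: span_t; exists w.
Qed.

Lemma ru_singly_generated : singly_generated th M.
Proof.
have [t1 Mt1 span1] := image_twshift_cyclic (f := @ra F) (fun=> erefl) (fun=> erefl).
have [t2 Mt2 span2] := image_twshift_cyclic ev1_th (@addr0 F).
pose g := (1 - ru_u F) *: t1 + ru_u F *: t2.
have ra_g : map_mx (@ra F) g = map_mx (@ra F) t1.
  by rewrite map_mxD !map_mxZ rmorphB rmorph1 /= subr0 scale1r scale0r addr0.
have ev1_g : map_mx ev1 g = map_mx ev1 t2.
  by rewrite map_mxD !map_mxZ rmorphB rmorph1 /= ev1_u subrr scale0r add0r scale1r.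
exists g => t; split=> [Mt | [r ->]]; last by apply/skact_closed/MD; apply: MZ.
have [c1 ra_t] := span1 t Mt; have [c2 ev1_t] := span2 t Mt.
exists (\poly_(j < n) mkRu (c1 j) (c2 j - c1 j)).
rewrite (skactE th0 _ (size_poly _ _)); apply: map_mx_ru_eq.
- rewrite ra_t map_mx_twshift_sum // ra_g; apply: eq_bigr => j _.
  by rewrite coef_poly ltn_ord.
- rewrite ev1_t map_mx_twshift_sum ?ev1_g; last exact: ev1_th.
  by apply: eq_bigr => j _; rewrite coef_poly ltn_ord /= /ev1 /= subrKC.
Qed.

End RuSkewCyclic.

Lemma Theta_is_additive (F : fieldType) p i :
  p \in [pchar F] -> {morph @Theta F p i : x y / x + y}.
Proof.
move=> char_p x y; rewrite /Theta exprDn_pchar // pnatX (pnatE _ (pcharf_prime char_p)).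
by rewrite char_p.
Qed.

Lemma Theta_neq0 (F : fieldType) p i (x : F) : x != 0 -> Theta p i x != 0.
Proof. exact: expf_neq0. Qed.

Theorem lemma2 (F : finFieldType) (p m i : nat) (hp : prime p)
    (hq : #|F| = (p ^ m)%N) (alpha beta : nat)
    (ha : (0 < alpha)%N) (hb : (0 < beta)%N)
    (C : 'rV[F]_alpha * 'rV[Ru F]_beta -> Prop)
    (hC : skew_cyclic_code p i C) :
  let M : 'rV[Ru F]_beta -> Prop :=
    fun t => exists m0 : 'rV[F]_alpha, C (m0, t) in
  left_submodule (theta p i) M /\ singly_generated (theta p i) M.
Proof.
move=> M; have [C0 CD CZ CS] := hC.
have ThD := Theta_is_additive i (card_finPcharP hq hp).
have M0 : M 0 by exists 0.
have MD s t : M s -> M t -> M (s + t).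
  by move=> [m1 C1] [m2 C2]; exists (m1 + m2); apply: CD C1 C2.
have MZ a t : M t -> M (a *: t).
  move=> [m0 Ct]; exists (map_mx (fun z => ra a * z) m0).
  rewrite (_ : a *: t = map_mx (fun z => a * z) t); first exact: CZ Ct.
  by apply/rowP => k; rewrite !mxE.
have MS t : M t -> M (twshift (theta p i) t).
  by move=> [m0 Ct]; exists (twshift (Theta p i) m0); apply: CS Ct.
split; first exact: ru_left_submodule.
exact: ru_singly_generated (@Theta_neq0 F p i) _ M0 MD MZ MS.
Qed.
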